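(* Let $L$ be a principal element lattice and $n\ge1$. Then the following statements are equivalent: (1) Every proper element of $L$ is a quasi $n$-absorbing element of $L$. (2) For every $a,b\in L_*$, $a^n=ca^nb$ for some $c\in L$ or $a^{n-1}b=da^nb$ for some $d\in L$. (3) For all $a_1,a_2,\dots,a_{n+1}\in L_*$, $(a_1\wedge a_2\wedge\cdots\wedge a_n)^n\le c\,a_1a_2\cdots a_{n+1}$ for some $c\in L$ or $(a_1\wedge a_2\wedge\cdots\wedge a_n)^{n-1}a_{n+1}\le d\,a_1a_2\cdots a_{n+1}$ for some $d\in L$.
   Context: A multiplicative lattice is a complete lattice $L$ with least element $0$ and compact greatest element $1$, equipped with a commutative, associative product that distributes over arbitrary joins and has $1$ as multiplicative identity. An element $a$ is compact if $a\le\bigvee_{\alpha\in I}a_\alpha$ implies $a\le\bigvee_{\alpha\in I_0}a_\alpha$ for some finite $I_0\subseteq I$; $L_*$ denotes the set of compact elements. For $x,y\in L$, $(x:y)=\bigvee\{z: zy\le x\}$. An element $e$ is principal if $a\wedge be=((a:e)\wedge b)e$ and $(ae\vee b):e=(b:e)\vee a$ for all $a,b\in L$; a principal element lattice is a multiplicative lattice in which every element is principal. $a^0=1$. A proper element $q$ ($q<1$) is quasi $n$-absorbing if whenever $a^nb\le q$ for some $a,b\in L_*$, then $a^n\le q$ or $a^{n-1}b\le q$. *)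

From Stdlib Require Import List.
Import ListNotations.
Set Implicit Arguments.

Record MultLattice := {
  carrier :> Type;
  le : carrier -> carrier -> Prop;
  sup : (carrier -> Prop) -> carrier;
  mul : carrier -> carrier -> carrier;
  one : carrier;
  le_refl : forall x, le x x;
  le_trans : forall x y z, le x y -> le y z -> le x z;
  le_antisym : forall x y, le x y -> le y x -> x = y;
  sup_ub : forall (S : carrier -> Prop) x, S x -> le x (sup S);
  sup_least : forall (S : carrier -> Prop) y,
      (forall x, S x -> le x y) -> le (sup S) y;
  mulC : forall x y, mul x y = mul y x;
  mulA : forall x y z, mul x (mul y z) = mul (mul x y) z;
  mul1x : forall x, mul one x = x;
  mul_sup : forall a (S : carrier -> Prop),
      mul a (sup S) = sup (fun y => exists x, S x /\ y = mul a x);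
  one_top : forall x, le x one;
  one_compact : forall (S : carrier -> Prop), le one (sup S) ->
      exists l : list carrier, (forall x, In x l -> S x) /\
                               le one (sup (fun x => In x l))
}.

Arguments le {L} x y : rename.
Arguments sup {L} S : rename.
Arguments mul {L} x y : rename.
Arguments one {L} : rename.

Section Ops.
Variable L : MultLattice.

Definition zero : L := sup (fun _ => False).
Definition join (a b : L) : L := sup (fun x => x = a \/ x = b).
Definition meet (a b : L) : L := sup (fun z => le z a /\ le z b).

Definition compact (a : L) : Prop :=
  forall (S : L -> Prop), le a (sup S) ->
    exists l : list L, (forall x, In x l -> S x) /\ le a (sup (fun x => In x l)).

Definition colon (x y : L) : L := sup (fun z => le (mul z y) x).

Definition principal (e : L) : Prop :=
  (forall a b : L, meet a (mul b e) = mul (meet (colon a e) b) e) /\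
  (forall a b : L, colon (join (mul a e) b) e = join (colon b e) a).

Definition principal_element_lattice : Prop := forall e : L, principal e.

Fixpoint pow (a : L) (n : nat) : L :=
  match n with O => one | S k => mul a (pow a k) end.

Definition proper (q : L) : Prop := le q one /\ q <> one.

Definition quasi_n_absorbing (n : nat) (q : L) : Prop :=
  proper q /\
  forall a b : L, compact a -> compact b ->
    le (mul (pow a n) b) q -> le (pow a n) q \/ le (mul (pow a (n - 1)) b) q.

Definition meet_list (l : list L) : L := fold_right meet one l.
Definition prod_list (l : list L) : L := fold_right mul one l.

End Ops.
Arguments zero {L}.
Arguments join {L} a b.
Arguments meet {L} a b.
Arguments compact {L} a.
Arguments colon {L} x y.
Arguments principal {L} e.
Arguments pow {L} a n.
Arguments proper {L} q.
Arguments quasi_n_absorbing {L} n q.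
Arguments meet_list {L} l.
Arguments prod_list {L} l.

(** In a principal element lattice [x <= y] gives [x = (x : y) y], so an
    element is a multiple of [y] exactly when it lies below [y].  Hence (2)
    says that [a^n <= a^n b] or [a^(n-1) b <= a^n b]: the element [a^n b] is
    quasi [n]-absorbing with respect to the pair [(a, b)], which is (1) read at
    [q = a^n b].  Condition (3) specialises to (2) by taking
    [a_1 = ... = a_n = a] and [a_(n+1) = b]; conversely (2) applied to
    [a_1 /\ ... /\ a_n] and [a_(n+1)] gives (3), because
    [(a_1 /\ ... /\ a_n)^n a_(n+1) <= a_1 ... a_(n+1)] and every element of a
    principal element lattice is compact. *)
From Stdlib Require Import List Arith Lia Classical.

Arguments le_refl {m} x.
Arguments le_trans {m} x y z _ _.
Arguments le_antisym {m} x y _ _.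
Arguments sup_ub {m} S x _.
Arguments sup_least {m} S y _.
Arguments mulC {m} x y.
Arguments mulA {m} x y z.
Arguments mul1x {m} x.
Arguments mul_sup {m} a S.
Arguments one_top {m} x.
Arguments one_compact {m} S _.

Section MultLatticeTheory.
Context {L : MultLattice}.
Implicit Types x y z w a b c : L.

Lemma zero_le x : le (@zero L) x.
Proof. apply sup_least. intros _ []. Qed.

Lemma join_eq_l x y : le y x -> join x y = x.
Proof.
  intros Hyx. apply le_antisym.
  - apply sup_least. intros z [-> | ->]; auto using le_refl.
  - apply sup_ub. auto.
Qed.

Lemma join_lub x y z : le x z -> le y z -> le (join x y) z.
Proof. intros. apply sup_least. intros w [-> | ->]; auto. Qed.

Lemma meet_le_l a b : le (meet a b) a.
Proof. apply sup_least. intros z [H _]; exact H. Qed.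

Lemma meet_le_r a b : le (meet a b) b.
Proof. apply sup_least. intros z [_ H]; exact H. Qed.

Lemma meet_glb a b z : le z a -> le z b -> le z (meet a b).
Proof. intros. apply sup_ub. auto. Qed.

Lemma meet_eq_l a b : le a b -> meet a b = a.
Proof.
  intros. apply le_antisym; [apply meet_le_l | apply meet_glb; auto using le_refl].
Qed.

Lemma mul_le_mono_l a x y : le x y -> le (mul a x) (mul a y).
Proof.
  intros Hxy. rewrite <- (join_eq_l _ _ Hxy). unfold join.
  rewrite mul_sup. apply sup_ub. exists x. auto.
Qed.

Lemma mul_le_mono_r a x y : le x y -> le (mul x a) (mul y a).
Proof. intros. rewrite (mulC x), (mulC y). apply mul_le_mono_l; assumption. Qed.

Lemma mul_le_mono x y z w : le x y -> le z w -> le (mul x z) (mul y w).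
Proof.
  intros. apply le_trans with (mul y z); [apply mul_le_mono_r | apply mul_le_mono_l];
    assumption.
Qed.

Lemma mul_le_r c x : le (mul c x) x.
Proof. rewrite <- (mul1x x) at 2. apply mul_le_mono_r, one_top. Qed.

Lemma colon_mul_le x y : le (mul (colon x y) y) x.
Proof.
  unfold colon. rewrite mulC, mul_sup. apply sup_least.
  intros w [z [Hz ->]]. rewrite mulC. exact Hz.
Qed.

Lemma le_colon x y z : le (mul z y) x -> le z (colon x y).
Proof. intros. apply sup_ub. assumption. Qed.

Lemma pow_le_mono x y k : le x y -> le (pow x k) (pow y k).
Proof. intros. induction k; simpl; [apply le_refl | apply mul_le_mono; assumption]. Qed.

Lemma pow_meet_list_le_prod_list (l : list L) :
  le (pow (meet_list l) (length l)) (prod_list l).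
Proof.
  induction l as [|h t IH]; simpl; [apply le_refl |].
  apply mul_le_mono; [apply meet_le_l |].
  apply le_trans with (pow (meet_list t) (length t)); [apply pow_le_mono, meet_le_r | exact IH].
Qed.

Lemma prod_list_app1 (l : list L) z : prod_list (l ++ z :: nil) = mul (prod_list l) z.
Proof.
  induction l as [|h t IH]; simpl.
  - rewrite mulC, mul1x. reflexivity.
  - unfold prod_list in *. simpl in IH. rewrite IH. apply mulA.
Qed.

Lemma prod_list_repeat a k : prod_list (repeat a k) = pow a k.
Proof. induction k as [|k IH]; simpl; [reflexivity |]. unfold prod_list in *. rewrite IH. reflexivity. Qed.

Lemma meet_list_repeat a k : 1 <= k -> meet_list (repeat a k) = a.
Proof.
  intros Hk. destruct k as [|k]; [lia |]. clear Hk.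
  induction k as [|k IH]; simpl; [apply meet_eq_l, one_top |].
  unfold meet_list in *. simpl in IH. rewrite IH. apply meet_eq_l, le_refl.
Qed.

Lemma le_sup_list_of_cover (S : L -> Prop) s (l : list L) :
  (forall x, In x l -> le (mul x s) zero \/ exists a, S a /\ le (mul x s) a) ->
  exists l', (forall a, In a l' -> S a) /\
             forall x, In x l -> le (mul x s) (sup (fun a => In a l')).
Proof.
  induction l as [|h t IH]; intros Hcover.
  - exists nil. split; intros ? [].
  - destruct IH as [l' [Hl'S Hl']]; [intros; apply Hcover; right; assumption |].
    destruct (Hcover h (or_introl eq_refl)) as [Hzero | [a [Ha Hha]]].
    + exists l'. split; [exact Hl'S |].
      intros x [<- | Hx]; [| auto].
      apply le_trans with zero; [exact Hzero | apply zero_le].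
    + exists (a :: l'). split; [intros b [<- | Hb]; auto |].
      assert (Hsub : le (sup (fun b => In b l')) (sup (fun b => In b (a :: l')))).
      { apply sup_least. intros b Hb. apply sup_ub. right; exact Hb. }
      intros x [<- | Hx].
      * apply le_trans with a; [exact Hha | apply sup_ub; left; reflexivity].
      * apply le_trans with (sup (fun b => In b l')); auto.
Qed.

End MultLatticeTheory.

Section PrincipalElementLattice.
Context {L : MultLattice}.
Hypothesis principal_L : principal_element_lattice L.
Implicit Types x y : L.

Lemma le_colon_mul_eq {x y} : le x y -> x = mul (colon x y) y.
Proof.
  intros Hxy. destruct (principal_L y) as [Hmeet _]. specialize (Hmeet x one).
  rewrite mul1x, (meet_eq_l _ _ Hxy), (meet_eq_l _ _ (one_top _)) in Hmeet. exact Hmeet.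
Qed.

Lemma le_mul_exists {x y} : le x y -> exists c, le x (mul c y).
Proof. intros Hxy. exists (colon x y). rewrite <- (le_colon_mul_eq Hxy). apply le_refl. Qed.

(* [s] is the join of the [(a : s) s] with [a] in [S], and the second
   principal identity turns [s <= c s] into [1 <= (0 : s) \/ c]; the
   compactness of [1] then selects finitely many [a]. *)
Lemma principal_lattice_compact (e : L) : compact e.
Proof.
  intros S He. set (s := sup S).
  set (T := fun x => exists a, (S a \/ a = zero) /\ x = colon a s).
  assert (Hs : le s (mul (sup T) s)).
  { apply sup_least. intros a Ha.
    rewrite (le_colon_mul_eq (sup_ub _ _ Ha)). apply mul_le_mono_r.
    apply sup_ub. exists a; auto. }
  assert (Hone : le one (sup T)).
  { destruct (principal_L s) as [_ Hcolon]. specialize (Hcolon (sup T) zero).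
    rewrite join_eq_l in Hcolon by apply zero_le.
    apply le_trans with (colon (mul (sup T) s) s).
    - apply le_colon. rewrite mul1x. exact Hs.
    - rewrite Hcolon. apply join_lub; [| apply le_refl].
      apply sup_ub. exists zero. auto. }
  destruct (one_compact T Hone) as [l [HlT Hl1]].
  destruct (le_sup_list_of_cover S s l) as [l' [Hl'S Hl']].
  { intros x Hx. destruct (HlT x Hx) as [a [[Ha | ->] ->]].
    - right. exists a. split; [exact Ha | apply colon_mul_le].
    - left. apply colon_mul_le. }
  exists l'. split; [exact Hl'S |].
  apply le_trans with s; [exact He |].
  apply le_trans with (mul (sup (fun x => In x l)) s).
  - rewrite <- (mul1x s) at 1. apply mul_le_mono_r, Hl1.
  - rewrite mulC, mul_sup. apply sup_least. intros y [x [Hx ->]].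
    rewrite mulC. auto.
Qed.

End PrincipalElementLattice.

Definition quasi_absorbs {L : MultLattice} (n : nat) (a b : L) : Prop :=
  le (pow a n) (mul (pow a n) b) \/ le (mul (pow a (n - 1)) b) (mul (pow a n) b).

Section QuasiAbsorbing.
Context {L : MultLattice} (n : nat).
Implicit Types a b : L.

Lemma quasi_absorbs_multipleP a b :
  principal_element_lattice L ->
  ((exists c, pow a n = mul (mul c (pow a n)) b) \/
   (exists d, mul (pow a (n - 1)) b = mul (mul d (pow a n)) b)) <->
  quasi_absorbs n a b.
Proof.
  intros principal_L. split.
  - intros [[c Hc] | [d Hd]]; [left | right];
      [rewrite Hc at 1 | rewrite Hd at 1]; rewrite <- mulA; apply mul_le_r.
  - intros [H | H]; [left | right]; eexists; rewrite <- mulA;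
      apply (le_colon_mul_eq principal_L H).
Qed.

Lemma quasi_n_absorbing_allP :
  (forall q : L, proper q -> quasi_n_absorbing n q) <->
  (forall a b, compact a -> compact b -> quasi_absorbs n a b).
Proof.
  split.
  - intros Habs a b Ha Hb.
    destruct (classic (mul (pow a n) b = one)) as [Hone | Hproper].
    + left. rewrite Hone. apply one_top.
    + apply (proj2 (Habs _ (conj (one_top _) Hproper))); auto using le_refl.
  - intros Hqa q Hq. split; [exact Hq |]. intros a b Ha Hb Hab.
    destruct (Hqa a b Ha Hb) as [H | H]; [left | right]; eapply le_trans; eassumption.
Qed.

Lemma quasi_absorbs_meet_list (f : nat -> L) :
  quasi_absorbs n (meet_list (map f (seq 0 n))) (f n) ->
  le (pow (meet_list (map f (seq 0 n))) n) (prod_list (map f (seq 0 (S n)))) \/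
  le (mul (pow (meet_list (map f (seq 0 n))) (n - 1)) (f n))
     (prod_list (map f (seq 0 (S n)))).
Proof.
  intros Hqa.
  assert (Hprod : le (mul (pow (meet_list (map f (seq 0 n))) n) (f n))
                     (prod_list (map f (seq 0 (S n))))).
  { rewrite seq_S, map_app; simpl; rewrite prod_list_app1. apply mul_le_mono_r.
    pose proof (pow_meet_list_le_prod_list (map f (seq 0 n))) as Hle.
    rewrite length_map, length_seq in Hle. exact Hle. }
  destruct Hqa as [H | H]; [left | right]; eapply le_trans; eassumption.
Qed.

Lemma quasi_absorbs_of_meet_list a b :
  1 <= n ->
  let f i := if Nat.ltb i n then a else b in
  ((exists c, le (pow (meet_list (map f (seq 0 n))) n)
                 (mul c (prod_list (map f (seq 0 (S n)))))) \/
   (exists d, le (mul (pow (meet_list (map f (seq 0 n))) (n - 1)) (f n))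
                 (mul d (prod_list (map f (seq 0 (S n))))))) ->
  quasi_absorbs n a b.
Proof.
  intros Hn f.
  assert (Hfirst : map f (seq 0 n) = repeat a n).
  { rewrite <- (length_seq n 0) at 2. rewrite <- map_const.
    apply map_ext_in. intros i Hi. apply in_seq in Hi. unfold f.
    destruct (Nat.ltb_spec i n); [reflexivity | lia]. }
  assert (Hlast : f n = b).
  { unfold f. destruct (Nat.ltb_spec n n); [lia | reflexivity]. }
  assert (Hprod : prod_list (map f (seq 0 (S n))) = mul (pow a n) b).
  { rewrite seq_S, map_app; simpl; rewrite prod_list_app1, Hfirst, prod_list_repeat, Hlast.
    reflexivity. }
  rewrite Hprod, Hfirst, Hlast, meet_list_repeat by exact Hn.
  intros [[c Hc] | [d Hd]]; [left | right]; eapply le_trans; (eassumption || apply mul_le_r).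
Qed.

End QuasiAbsorbing.

(* Indices: the paper's a_1, ..., a_{n+1} are a 0, ..., a n. *)
Theorem mainTheorem11 (L : MultLattice) (n : nat) :
  principal_element_lattice L -> 1 <= n ->
  ((forall q : L, proper q -> quasi_n_absorbing n q) <->
   (forall a b : L, compact a -> compact b ->
      (exists c : L, pow a n = mul (mul c (pow a n)) b) \/
      (exists d : L, mul (pow a (n - 1)) b = mul (mul d (pow a n)) b)))
  /\
  ((forall a b : L, compact a -> compact b ->
      (exists c : L, pow a n = mul (mul c (pow a n)) b) \/
      (exists d : L, mul (pow a (n - 1)) b = mul (mul d (pow a n)) b)) <->
   (forall a : nat -> L, (forall i, i <= n -> compact (a i)) ->
      (exists c : L, le (pow (meet_list (map a (seq 0 n))) n)
                        (mul c (prod_list (map a (seq 0 (S n)))))) \/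
      (exists d : L, le (mul (pow (meet_list (map a (seq 0 n))) (n - 1)) (a n))
                        (mul d (prod_list (map a (seq 0 (S n)))))))).
Proof.
  intros principal_L Hn.
  pose proof (fun a b => quasi_absorbs_multipleP n a b principal_L) as Hmultiple.
  split; split.
  - intros Habs a b Ha Hb. apply Hmultiple, (proj1 (quasi_n_absorbing_allP n) Habs);
      assumption.
  - intros H2. apply (proj2 (quasi_n_absorbing_allP n)). intros a b Ha Hb.
    apply Hmultiple, H2; assumption.
  - intros H2 f _.
    destruct (quasi_absorbs_meet_list _ f
                (proj1 (Hmultiple _ _) (H2 _ _ (principal_lattice_compact principal_L _)
                                               (principal_lattice_compact principal_L _))))
      as [H | H]; [left | right]; apply (le_mul_exists principal_L H).
  - intros H3 a b Ha Hb. apply Hmultiple, (quasi_absorbs_of_meet_list _ _ _ Hn).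
    apply H3. intros i _. destruct (Nat.ltb i n); assumption.
Qed.
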